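(* Let $X\neq\{0\}$ be a real normed space and let $\mathcal{G}\subset C(\mathbb{R})$ be fundamental in $C(\mathbb{R})$. Let $\mathcal{F}\subset X^*$ be such that $\{f/\|f\|: f\in\mathcal{F},\ f\neq0\}$ is dense in the unit sphere $\{f\in X^*:\|f\|=1\}$ with respect to the operator norm. Then $\mathcal{G}\circ\mathcal{F}=\{g\circ f: g\in\mathcal{G},\ f\in\mathcal{F}\}$ is fundamental in $C(X)$.
   Context: $X^*$ is the space of bounded linear functionals on $X$ with the operator norm $\|f\|=\sup_{\|x\|\le1}|f(x)|$. For a normed space $Y$, a subset $S\subset C(Y)$ (continuous real functions on $Y$) is called fundamental if its linear span is dense in $C(Y)$ in the sense of uniform convergence on compact sets: for every compact $K\subset Y$, every $h\in C(Y)$ and every $\varepsilon>0$ there is $s$ in the span of $S$ with $\sup_{x\in K}|h(x)-s(x)|<\varepsilon$. *)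

From HB Require Import structures.
From mathcomp Require Import all_boot all_order all_algebra.
From mathcomp Require Import all_classical all_reals all_analysis.
Set Implicit Arguments. Unset Strict Implicit. Unset Printing Implicit Defensive.
Import Order.TTheory GRing.Theory Num.Theory.
Import numFieldNormedType.Exports.
Local Open Scope classical_set_scope.
Local Open Scope ring_scope.

Definition in_span (R : realType) (Y : Type) (S : set (Y -> R)) (s : Y -> R) :=
  exists (n : nat) (c : 'I_n -> R) (g : 'I_n -> Y -> R),
    (forall i, S (g i)) /\ s = (fun y => \sum_(i < n) c i * g i y).

(* S is a subset of C(Y) whose span is dense for uniform convergence on
   compact sets: sup_{x in K} |h x - s x| < eps is written as
   "exists d < eps bounding |h x - s x| on K". *)
Definition fundamental (R : realType) (Y : topologicalType) (S : set (Y -> R)) :=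
  (forall s, S s -> continuous s) /\
  forall (K : set Y) (h : Y -> R) (eps : R),
    compact K -> continuous h -> 0 < eps ->
    exists s, in_span S s /\
      exists d, d < eps /\ forall x, K x -> `|h x - s x| <= d.

Definition is_dual (R : realType) (X : normedModType R) (f : X -> R) :=
  (forall (a : R) (x y : X), f (a *: x + y) = a * f x + f y) /\
  exists M : R, forall x, `|f x| <= M * `|x|.

Definition opnorm (R : realType) (X : normedModType R) (f : X -> R) : R :=
  sup [set `|f x| | x in [set x : X | `|x| <= 1]].

(* The exponentials exp o phi of functionals phi in X^* form a family closed under
   products (exp phi * exp psi = exp (phi + psi)) whose span contains the constants
   and, by Hahn-Banach, separates points; by Stone-Weierstrass its span is dense in
   C(K) for every compact K.  Each exp o phi is in turn uniformly close on K to
   t |-> exp (c t) composed with some f in F, because phi / ||phi|| is approximated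
   in norm by some f / ||f||; and t |-> exp (c t) is approximated on the compact set
   f(K) by the span of G. *)

From HB Require Import structures.
From mathcomp Require Import all_boot all_order all_algebra.
From mathcomp Require Import all_classical all_reals all_analysis.
From mathcomp Require Import ring lra finmap.
Import Order.TTheory GRing.Theory Num.Theory.
Import numFieldNormedType.Exports.
Local Open Scope classical_set_scope.
Local Open Scope ring_scope.
Set Implicit Arguments. Unset Strict Implicit. Unset Printing Implicit Defensive.

Section DualFunctional.
Variables (R : realType) (X : normedModType R).
Implicit Types (f g : X -> R) (x y : X).

Lemma dual0 f : is_dual f -> f 0 = 0.
Proof. by move=> [lf _]; have := lf 1 0 0; rewrite scaler0 addr0 mul1r; lra. Qed.

Lemma dualZ f a x : is_dual f -> f (a *: x) = a * f x.
Proof. by move=> fd; have := fd.1 a x 0; rewrite !addr0 dual0 // addr0. Qed.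

Lemma dualD f x y : is_dual f -> f (x + y) = f x + f y.
Proof. by move=> fd; have := fd.1 1 x y; rewrite scale1r mul1r. Qed.

Lemma dualB f x y : is_dual f -> f (x - y) = f x - f y.
Proof. by move=> fd; rewrite dualD // -scaleN1r dualZ // mulN1r. Qed.

Lemma dual_lin a b f g : is_dual f -> is_dual g ->
  is_dual (fun x => a * f x + b * g x).
Proof.
move=> fd gd; split=> [c x y|]; first by rewrite !dualD // !dualZ //; ring.
have [[_ [M HM]] [_ [N HN]]] := (fd, gd).
exists (`|a| * `|M| + `|b| * `|N|) => x.
rewrite (le_trans (ler_normD _ _)) // !normrM mulrDl -!mulrA.
by rewrite lerD // ler_wpM2l // (le_trans (HM x), le_trans (HN x)) //
  ler_wpM2r // real_ler_norm ?num_real.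
Qed.

Lemma dual_scale c f : is_dual f -> is_dual (fun x => c * f x).
Proof.
move=> fd; have -> : (fun x => c * f x) = (fun x => c * f x + 0 * f x).
  by apply/funext => x; rewrite mul0r addr0.
exact: dual_lin.
Qed.

Lemma dual_add f g : is_dual f -> is_dual g -> is_dual (fun x => f x + g x).
Proof.
move=> fd gd; have -> : (fun x => f x + g x) = (fun x => 1 * f x + 1 * g x).
  by apply/funext => x; rewrite !mul1r.
exact: dual_lin.
Qed.

Lemma dual_cst0 : is_dual (fun _ : X => 0 : R).
Proof. by split=> [*|]; [rewrite mulr0 addr0 | exists 0 => x; rewrite normr0 mul0r]. Qed.

Lemma opnorm_ub f x : is_dual f -> `|x| <= 1 -> `|f x| <= opnorm f.
Proof.
move=> [_ [M HM]] x1; apply: ub_le_sup; last by exists x.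
exists `|M| => _ [y y1 <-]; apply: (le_trans (HM y)).
by rewrite (le_trans (ler_wpM2r (normr_ge0 y) (ler_norm M))) // ler_piMr.
Qed.

Lemma opnorm_ge0 f : is_dual f -> 0 <= opnorm f.
Proof. by move=> fd; rewrite (le_trans _ (opnorm_ub (x:=0) fd _)) // normr0. Qed.

Lemma opnorm_le f M : (forall x, `|x| <= 1 -> `|f x| <= M) -> opnorm f <= M.
Proof.
move=> HM; apply: ge_sup; first by exists `|f 0|, 0 => //=; rewrite normr0.
by move=> _ [y y1 <-]; exact: HM.
Qed.

Lemma opnorm_bound f x : is_dual f -> `|f x| <= opnorm f * `|x|.
Proof.
move=> fd; have [->|x0] := eqVneq x 0; first by rewrite dual0 // !normr0 mulr0.
have nx : 0 < `|x| by rewrite normr_gt0.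
have := opnorm_ub (x := `|x|^-1 *: x) fd.
rewrite normrZ dualZ // normrM normrV ?unitfE ?normr_eq0 // normr_id mulVf ?normr_eq0 //.
by move=> /(_ (lexx _)); rewrite ler_pdivrMl // mulrC.
Qed.

Lemma opnorm_gt0 f x : is_dual f -> f x != 0 -> 0 < opnorm f.
Proof.
move=> fd fx; rewrite lt_def opnorm_ge0 // andbT; apply: contraNneq fx => n0.
by rewrite -normr_le0 (le_trans (opnorm_bound x fd)) // n0 mul0r.
Qed.

Lemma opnormZ f c : is_dual f -> opnorm (fun x => c * f x) = `|c| * opnorm f.
Proof.
move=> fd; have cfd := dual_scale c fd.
have le_cf g d : is_dual g -> opnorm (fun x => d * g x) <= `|d| * opnorm g.
  move=> gd; apply: opnorm_le => x x1; rewrite normrM.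
  by rewrite ler_wpM2l // opnorm_ub.
apply/eqP; rewrite eq_le le_cf //=.
have [->|c0] := eqVneq c 0; first by rewrite normr0 mul0r (opnorm_ge0 (dual_scale 0 fd)).
rewrite -ler_pdivlMl ?normr_gt0 // -normrV ?unitfE //.
suff -> : opnorm f = opnorm (fun x => c^-1 * (c * f x)) by exact: le_cf.
by congr opnorm; apply/funext => x; rewrite mulrA mulVf // mul1r.
Qed.

Lemma dual_continuous f : is_dual f -> continuous f.
Proof.
move=> fd x; have M0 : 0 < opnorm f + 1 by rewrite ltr_wpDl ?opnorm_ge0.
apply/cvgrPdist_lt => e e0.
have : \forall y \near x, `|x - y| < e / (opnorm f + 1).
  by apply: (@cvgr_dist_lt _ _ _ (nbhs x) _ id); [exact: cvg_id | rewrite divr_gt0].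
apply: filterS => y; rewrite ltr_pdivlMr // => xy.
rewrite -dualB //; apply: le_lt_trans (opnorm_bound _ fd) _.
have := normr_ge0 (x - y); have := opnorm_ge0 fd; nra.
Qed.

End DualFunctional.

Section HahnBanach.
Variables (R : realType) (X : normedModType R).

Record dominated (S : set X) (f : X -> R) : Prop := Dominated {
  dominated_sub0 : S 0;
  dominated_subP : forall a x y, S x -> S y -> S (a *: x + y);
  dominated_linear : forall a x y, S x -> S y -> f (a *: x + y) = a * f x + f y;
  dominated_le : forall x, S x -> f x <= `|x| }.

Definition extends (p q : set X * (X -> R)) :=
  p.1 `<=` q.1 /\ forall x, p.1 x -> q.2 x = p.2 x.

Lemma extends_refl p : extends p p.
Proof. by split. Qed.

Lemma extends_trans p q r : extends p q -> extends q r -> extends p r.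
Proof.
move=> [pq1 pq2] [qr1 qr2]; split=> [x /pq1/qr1 //|x px].
by rewrite qr2 ?pq2 //; exact: pq1.
Qed.

Section Dominated.
Variables (S : set X) (f : X -> R).
Hypothesis fS : dominated S f.

Lemma dominatedZ a x : S x -> S (a *: x).
Proof.
by move=> Sx; rewrite -[_ *: x]addr0; exact: (dominated_subP fS a Sx (dominated_sub0 fS)).
Qed.

Lemma dominatedD x y : S x -> S y -> S (x + y).
Proof. by move=> Sx Sy; rewrite -[x]scale1r; exact: (dominated_subP fS 1 Sx Sy). Qed.

Lemma dominatedB x y : S x -> S y -> S (x - y).
Proof.
by move=> Sx Sy; rewrite -scaleN1r addrC; exact: (dominated_subP fS (-1) Sy Sx).
Qed.

Lemma dominated_f0 : f 0 = 0.
Proof.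
have := dominated_linear fS 1 (dominated_sub0 fS) (dominated_sub0 fS).
by rewrite scaler0 addr0 mul1r; lra.
Qed.

Lemma dominated_fZ a x : S x -> f (a *: x) = a * f x.
Proof.
move=> Sx; have := dominated_linear fS a Sx (dominated_sub0 fS).
by rewrite !addr0 dominated_f0 addr0.
Qed.

Lemma dominated_fD x y : S x -> S y -> f (x + y) = f x + f y.
Proof.
by move=> Sx Sy; have := dominated_linear fS 1 Sx Sy; rewrite scale1r mul1r.
Qed.

(* The admissible values c for the extension to [z] form the interval
   [sup_s (f s - |s - z|), inf_s (|s + z| - f s)], nonempty by subadditivity. *)
Lemma dominated_extension_bound z : exists c,
  (forall s, S s -> f s + c <= `|s + z|) /\ (forall s, S s -> f s - c <= `|s - z|).
Proof.
pose E := [set f s - `|s - z| | s in S].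
have E0 : E !=set0 by exists (f 0 - `|0 - z|), 0 => //; exact: dominated_sub0 fS.
have ubE s2 : S s2 -> ubound E (`|s2 + z| - f s2).
  move=> S2 _ [s1 S1 <-].
  have := dominated_le fS (dominatedD S1 S2); rewrite dominated_fD //.
  have := ler_normD (s1 - z) (s2 + z); rewrite [s2 + z]addrC addrA subrK.
  lra.
exists (sup E); split=> s Ss.
  by have := ge_sup E0 (ubE s Ss); lra.
have /(ub_le_sup (ex_intro _ _ (ubE 0 (dominated_sub0 fS)))) : E (f s - `|s - z|).
  by exists s.
lra.
Qed.

Lemma dominated_boundZ w d u s : (forall s, S s -> f s + d <= `|s + w|) ->
  0 < u -> S s -> f s + u * d <= `|s + u *: w|.
Proof.
move=> hw u0 Ss; have := hw _ (dominatedZ u^-1 Ss); rewrite dominated_fZ //.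
have -> : s + u *: w = u *: (u^-1 *: s + w).
  by rewrite scalerDr scalerA divff ?gt_eqF // scale1r.
rewrite normrZ gtr0_norm // => /(ler_wpM2l (ltW u0)).
by rewrite mulrDr mulrA divff ?gt_eqF // mul1r.
Qed.

Lemma decomposition_unique z s1 s2 t1 t2 : ~ S z -> S s1 -> S s2 ->
  s1 + t1 *: z = s2 + t2 *: z -> s1 = s2 /\ t1 = t2.
Proof.
move=> nSz S1 S2 e; suff tt : t1 = t2 by split => //; move: e; rewrite tt => /addIr.
apply: contrapT => /eqP ne; apply: nSz.
have -> : z = (t1 - t2)^-1 *: (s2 - s1).
  have -> : s2 - s1 = (t1 - t2) *: z.
    by rewrite scalerBl -[s2](addrK (t2 *: z)) -e addrAC [s1 + _]addrC addrK.
  by rewrite scalerA mulVf ?scale1r // subr_eq0.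
by apply: dominatedZ; apply: dominatedB.
Qed.

Lemma dominated_extend z c : ~ S z ->
  (forall s, S s -> f s + c <= `|s + z|) -> (forall s, S s -> f s - c <= `|s - z|) ->
  exists S' f', [/\ dominated S' f', extends (S, f) (S', f'), S' z & f' z = c].
Proof.
move=> nSz hp hm.
pose S' := [set x | exists s t, S s /\ x = s + t *: z].
pose dec x := xget (0, 0) [set p : X * R | S p.1 /\ x = p.1 + p.2 *: z].
pose f' x := f (dec x).1 + (dec x).2 * c.
have f'E s t : S s -> f' (s + t *: z) = f s + t * c.
  move=> Ss; rewrite /f'.
  have [] : [set p : X * R | S p.1 /\ s + t *: z = p.1 + p.2 *: z] (dec (s + t *: z)).
    by apply: xgetPex; exists (s, t).
  by case: (dec _) => s' t' /= Ss' /(decomposition_unique nSz Ss Ss') [-> ->].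
have S'E a s1 t1 s2 t2 : a *: (s1 + t1 *: z) + (s2 + t2 *: z) =
    (a *: s1 + s2) + (a * t1 + t2) *: z.
  by rewrite scalerDr scalerDl scalerA -!addrA; congr (_ + _); rewrite addrCA.
have S0 := dominated_sub0 fS.
exists S', f'; split.
- constructor.
  + by exists 0, 0; rewrite scale0r addr0.
  + move=> a _ _ [s1 [t1 [S1 ->]]] [s2 [t2 [S2 ->]]].
    exists (a *: s1 + s2), (a * t1 + t2); rewrite S'E; split=> //.
    exact: (dominated_subP fS a S1 S2).
  + move=> a _ _ [s1 [t1 [S1 ->]]] [s2 [t2 [S2 ->]]].
    rewrite S'E !f'E //; last exact: (dominated_subP fS a S1 S2).
    by rewrite (dominated_linear fS a S1 S2); ring.
  + move=> _ [s [t [Ss ->]]]; rewrite f'E //.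
    have [t0|t0|->] := ltgtP t 0; last
      by rewrite mul0r scale0r !addr0; exact: (dominated_le fS Ss).
    * have hm' s' : S s' -> f s' + - c <= `|s' + - z| by exact: hm.
      have u0 : 0 < - t by rewrite oppr_gt0.
      by have := dominated_boundZ hm' u0 Ss; rewrite !mulrNN scaleNr scalerN opprK.
    * exact: dominated_boundZ.
- by split=> [s Ss|s Ss /=];
    [exists s, 0 | rewrite -[s]addr0 -(scale0r z) f'E // mul0r]; rewrite ?scale0r ?addr0.
- by exists 0, 1; rewrite scale1r add0r.
- by rewrite -[z]add0r -[z]scale1r f'E // dominated_f0 mul1r add0r.
Qed.

End Dominated.

Lemma dominated_chain_ub (A : set (set X * (X -> R))) p0 : A p0 ->
  (forall p, A p -> dominated p.1 p.2) -> total_on A extends ->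
  exists q, dominated q.1 q.2 /\ forall p, A p -> extends p q.
Proof.
move=> Ap0 Adom Atot.
pose U := [set x | exists2 p, A p & p.1 x].
pose fU x := xget 0 [set v | exists p, [/\ A p, p.1 x & v = p.2 x]].
have fUE p x : A p -> p.1 x -> fU x = p.2 x.
  move=> Ap px.
  have [q [Aq qx ->]] : [set v | exists p, [/\ A p, p.1 x & v = p.2 x]] (fU x).
    by apply: xgetPex; exists (p.2 x), p.
  by have [[_ e]|[_ e]] := Atot _ _ Ap Aq; rewrite e.
have both x y : U x -> U y -> exists p, [/\ A p, p.1 x & p.1 y].
  move=> [p Ap px] [q Aq qy].
  have [[pq _]|[qp _]] := Atot _ _ Ap Aq; first by exists q; split => //; exact: pq.
  by exists p; split => //; exact: qp.
exists (U, fU); split; last by move=> p Ap; split=> [x px|x px /=]; [exists p | exact: fUE].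
constructor => /=.
- by exists p0 => //; exact: dominated_sub0 (Adom _ Ap0).
- move=> a x y Ux Uy; have [p [Ap px py]] := both x y Ux Uy.
  by exists p => //; exact: (dominated_subP (Adom _ Ap) a px py).
- move=> a x y Ux Uy; have [p [Ap px py]] := both x y Ux Uy.
  rewrite !(fUE p) //; last exact: (dominated_subP (Adom _ Ap) a px py).
  exact: (dominated_linear (Adom _ Ap) a px py).
- by move=> x [p Ap px]; rewrite (fUE p) //; exact: (dominated_le (Adom _ Ap) px).
Qed.

Theorem hahn_banach S0 f0 : dominated S0 f0 ->
  exists f : X -> R, [/\ forall a x y, f (a *: x + y) = a * f x + f y,
    forall x, f x <= `|x| & forall x, S0 x -> f x = f0 x].
Proof.
move=> f0S.
pose T := {p | dominated p.1 p.2 /\ extends (S0, f0) p}.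
pose le (a b : T) := `[< extends (sval a) (sval b) >].
have t0 : T by exists (S0, f0); split=> //; exact: extends_refl.
have leT_refl a : le a a by apply/asboolP; exact: extends_refl.
have leT_trans a b c : le a b -> le b c -> le a c.
  by move=> /asboolP ab /asboolP bc; apply/asboolP; exact: extends_trans ab bc.
have leT_chain (A : set T) : total_on A le -> exists t, forall s, A s -> le s t.
  move=> Atot; have [[a Aa]|A0] := pselect (exists a, A a); last first.
    by exists t0 => s As; exfalso; apply: A0; exists s.
  have [|||q [qdom qub]] := @dominated_chain_ub (sval @` A) (sval a).
  - by exists a.
  - by move=> _ [p Ap <-]; exact: (svalP p).1.
  - move=> _ _ [p Ap <-] [q Aq <-].
    by have [/asboolP|/asboolP] := Atot _ _ Ap Aq; [left|right].
  have q0 : extends (S0, f0) q.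
    by apply: extends_trans (svalP a).2 (qub _ _); exists a.
  by exists (exist _ q (conj qdom q0)) => s As; apply/asboolP; apply: qub; exists s.
have [[[S f] [fS fext]] fmax] := ZL_preorder t0 leT_refl leT_trans leT_chain.
have ST x : S x.
  apply: contrapT => nSx.
  have [c [hp hm]] := dominated_extension_bound fS x.
  have [S' [f' [f'S' ff' S'x _]]] := dominated_extend fS nSx hp hm.
  have f'ext : extends (S0, f0) (S', f') by exact: extends_trans fext ff'.
  have /fmax/asboolP [/= S'S _] : le (exist _ (S, f) (conj fS fext))
      (exist _ (S', f') (conj f'S' f'ext)) by exact/asboolP.
  exact/nSx/S'S.
exists f; split=> [a x y|x|x S0x].
- exact: (dominated_linear fS a (ST x) (ST y)).
- exact: (dominated_le fS (ST x)).
- by have [_ /= ->] := fext.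
Qed.

Corollary norming_functional (z : X) : z != 0 ->
  exists phi, [/\ is_dual phi, opnorm phi = 1 & phi z = `|z|].
Proof.
move=> z0.
have line0 : dominated [set 0] (fun _ => 0).
  by constructor=> // [a x y -> ->|a x y _ _]; rewrite ?scaler0 ?mulr0 addr0.
have [|||S1 [f1 [f1S1 _ S1z f1z]]] := dominated_extend line0 (z := z) (c := `|z|).
- by move=> /= z0'; move: z0; rewrite z0' eqxx.
- by move=> s ->; rewrite !add0r.
- by move=> s ->; rewrite !sub0r normrN; have := normr_ge0 z; lra.
have [phi [phi_lin phi_le phif1]] := hahn_banach f1S1.
have phiz : phi z = `|z| by rewrite phif1.
have phi0 : phi 0 = 0 by have := phi_lin 1 0 0; rewrite scaler0 addr0 mul1r; lra.
have phiN x : phi (- x) = - phi x.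
  by have := phi_lin (-1) x 0; rewrite !addr0 phi0 addr0 scaleN1r mulN1r.
have phi_norm x : `|phi x| <= `|x|.
  by rewrite ler_norml phi_le andbT lerNl -phiN -[X in _ <= X]normrN phi_le.
have phid : is_dual phi by split => //; exists 1 => x; rewrite mul1r.
exists phi; split=> //.
apply/eqP; rewrite eq_le opnorm_le => [|x /(le_trans (phi_norm x))] //=.
have nz : 0 < `|z| by rewrite normr_gt0.
by have := opnorm_bound z phid; rewrite phiz ger0_norm // ler_pMl.
Qed.

End HahnBanach.

Section SqrtIteration.
Variable R : realType.

(* On [0, 1] the iterates increase to sqrt t and are polynomials in t, so an
   algebra containing u^2 contains uniform approximations of |u|. *)
Fixpoint sqrt_iter (n : nat) (t : R) : R :=
  if n is n'.+1 then sqrt_iter n' t + (t - sqrt_iter n' t ^+ 2) / 2 else 0.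

Lemma sqrt_iterS n t :
  sqrt_iter n.+1 t = sqrt_iter n t + (t - sqrt_iter n t ^+ 2) / 2.
Proof. by []. Qed.

Lemma sqrt_iter_inv n a : 0 <= a <= 1 -> 0 <= sqrt_iter n (a ^+ 2) <= a /\
  (a - sqrt_iter n (a ^+ 2)) * (2 + n%:R * a) <= 2 * a.
Proof.
move=> /andP [a0 a1]; elim: n => [|n [/andP [p0 pa] IH]].
  by rewrite /= lexx a0 mul0r addr0 subr0 mulrC.
rewrite sqrt_iterS -[n.+1%:R]natr1; set p := sqrt_iter n _ in p0 pa IH *.
have step : a - (p + (a ^+ 2 - p ^+ 2) / 2) = (a - p) * (1 - (a + p) / 2) by field.
have d0 : 0 <= a - p by rewrite subr_ge0.
have d'0 : 0 <= (a - p) * (1 - (a + p) / 2) by apply: mulr_ge0; lra.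
have inc0 : 0 <= (a ^+ 2 - p ^+ 2) / 2.
  by rewrite divr_ge0 // subr_ge0 lerXn2r ?nnegrE // (le_trans p0).
split; first by apply/andP; split; lra.
rewrite step; have n0 : 0 <= n%:R :> R by [].
nra.
Qed.

Lemma sqrt_iter_err n a : 0 <= a <= 1 ->
  0 <= a - sqrt_iter n (a ^+ 2) /\ n%:R * (a - sqrt_iter n (a ^+ 2)) <= 2.
Proof.
move=> a01; have [/andP [p0 pa] inv] := sqrt_iter_inv n a01.
split; first by rewrite subr_ge0.
have n0 : 0 <= n%:R :> R by [].
have [a0|a0] := eqVneq a 0.
  have -> : sqrt_iter n (a ^+ 2) = 0 by apply/eqP; rewrite eq_le p0 -a0 pa.
  by rewrite a0 subrr mulr0.
have ap : 0 < a by rewrite lt_def a0; case/andP: a01.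
rewrite -(ler_pM2r ap); nra.
Qed.

End SqrtIteration.

Lemma compact_norm_bound (R : realType) (T : topologicalType) (K : set T) (u : T -> R) :
  compact K -> continuous u -> exists2 M, 0 < M & forall x, K x -> `|u x| <= M.
Proof.
move=> cK cu.
have [M [_ HM]] := compact_bounded (continuous_compact (continuous_subspaceT cu) cK).
exists (`|M| + 1) => [|x Kx]; first by rewrite ltr_wpDl.
by apply: (HM (`|M| + 1)); [rewrite (le_lt_trans (ler_norm M)) // ltrDl | exists x].
Qed.

Section StoneWeierstrass.
Variables (R : realType) (T : ptopologicalType) (K : set T) (A : set (T -> R)).
Hypothesis cK : compact K.
Hypothesis A_cst : forall c, A (fun _ => c).
Hypothesis A_add : forall u v, A u -> A v -> A (fun x => u x + v x).
Hypothesis A_mul : forall u v, A u -> A v -> A (fun x => u x * v x).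
Hypothesis A_cont : forall u, A u -> continuous u.
Hypothesis A_closed : forall u, continuous u ->
  (forall e, 0 < e -> exists2 v, A v & forall x, K x -> `|u x - v x| <= e) -> A u.
Hypothesis A_sep : forall x y, K x -> K y -> x <> y -> exists2 u, A u & u x <> u y.

Lemma A_scale c u : A u -> A (fun x => c * u x).
Proof. exact: A_mul. Qed.

Lemma A_sub u v : A u -> A v -> A (fun x => u x - v x).
Proof.
move=> Au Av; have -> : (fun x => u x - v x) = (fun x => u x + (-1) * v x).
  by apply/funext => x; rewrite mulN1r.
by apply: A_add => //; exact: A_scale.
Qed.

Lemma A_abs u : A u -> A (fun x => `|u x|).
Proof.
move=> Au; have [M M0 HM] := compact_norm_bound cK (A_cont Au).
pose w x := (M^-1 * u x) * (M^-1 * u x).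
have Aw : A w by apply: A_mul; exact: A_scale.
have Aiter n : A (fun x => sqrt_iter n (w x)).
  elim: n => [|n IH]; first exact: A_cst.
  have -> : (fun x => sqrt_iter n.+1 (w x)) =
      (fun x => sqrt_iter n (w x) + 2^-1 * (w x - sqrt_iter n (w x) * sqrt_iter n (w x))).
    by apply/funext => x; rewrite sqrt_iterS mulrC expr2.
  by apply: A_add => //; apply: A_scale; apply: A_sub => //; exact: A_mul.
apply: A_closed => [x|e e0].
  by apply: continuous_comp; [exact: A_cont | exact: norm_continuous].
pose n := (Num.truncn (2 * M / e)).+1.
exists (fun x => M * sqrt_iter n (w x)) => [|x Kx]; first exact: A_scale.
have a01 : 0 <= M^-1 * `|u x| <= 1.
  apply/andP; split; first by rewrite mulr_ge0 // invr_ge0 ltW.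
  by rewrite mulrC ler_pdivrMr // mul1r HM.
have -> : w x = (M^-1 * `|u x|) ^+ 2.
  rewrite /w -expr2 -[LHS]real_normK ?num_real // -[RHS]real_normK ?num_real //.
  by rewrite !normrM normr_id.
have [d0 dn] := sqrt_iter_err n a01.
set a := M^-1 * _ in d0 dn *; set d := a - _ in d0 dn *.
have -> : `|u x| - M * sqrt_iter n (a ^+ 2) = M * d.
  by rewrite mulrBr /a mulrA divff ?gt_eqF // mul1r.
rewrite normrM !ger0_norm ?(ltW M0) //.
have := truncnS_gt (2 * M / e); rewrite -/n ltr_pdivrMr // => nM.
have : M * (n%:R * d) <= M * 2 by rewrite ler_wpM2l // ltW.
have n0 : 0 <= n%:R :> R by [].
nra.
Qed.

Lemma A_min u v : A u -> A v -> A (fun x => Num.min (u x) (v x)).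
Proof.
move=> Au Av; have -> : (fun x => Num.min (u x) (v x)) =
    (fun x => 2^-1 * ((u x + v x) - `|u x - v x|)).
  apply/funext => x; have [uv|vu] := leP (u x) (v x).
    by rewrite ler0_norm ?subr_le0 //; field.
  by rewrite gtr0_norm ?subr_gt0 //; field.
by apply: A_scale; apply: A_sub; [exact: A_add | apply: A_abs; exact: A_sub].
Qed.

Lemma A_interpolate (h : T -> R) x y : K x -> K y ->
  exists u, [/\ A u, u x = h x & u y = h y].
Proof.
move=> Kx Ky; have [<-|nxy] := pselect (x = y); first by exists (fun _ => h x).
have [v Av vxy] := A_sep Kx Ky nxy.
have d0 : v y - v x != 0 by rewrite subr_eq0; apply/eqP => /esym.
exists (fun z => h x + (h y - h x) / (v y - v x) * (v z - v x)); split.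
- by apply: A_add => //; apply: A_scale; exact: A_sub.
- by rewrite subrr mulr0 addr0.
- by rewrite divfK // addrC subrK.
Qed.

(* [w] is the pointwise minimum of the [u y] over a finite subcover of the
   open cover [K <= \bigcup_y [set z | u y z < g z]]. *)
Lemma A_min_cover (u : T -> T -> R) (g : T -> R) y0 : K y0 -> continuous g ->
  (forall y, K y -> A (u y)) -> (forall z, K z -> u z z < g z) ->
  exists w, [/\ A w, forall z, K z -> w z < g z & forall z, exists2 y, K y & w z = u y z].
Proof.
move=> Ky0 cg Au ug.
have [D DK Dcover] : finite_subset_cover K (fun y => [set z | u y z < g z]) K.
  have := cK; rewrite compact_cover; apply; last by move=> z Kz; exists z => //; exact: ug.
  move=> y Ky.
  have -> : [set z | u y z < g z] = (fun z => u y z - g z) @^-1` [set r | r < 0].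
    by apply/seteqP; split=> z /=; rewrite subr_lt0.
  apply: open_comp; last exact: open_lt.
  by move=> z _; apply: continuousB; [exact: (A_cont (Au y Ky)) | exact: cg].
pose minu (s : seq T) := foldr (fun y w z => Num.min (u y z) (w z)) (u y0) s.
have minuP (s : seq T) : (forall y, y \in s -> K y) -> [/\ A (minu s),
    forall z, exists2 y, K y & minu s z = u y z &
    forall y z, y \in s -> minu s z <= u y z].
  elim: s => [|y s IH] sK; first by split=> [|z|//]; [exact: Au | exists y0].
  have Ky : K y by apply: sK; rewrite mem_head.
  have [Am mval mle] : [/\ A (minu s), forall z, exists2 y, K y & minu s z = u y z &
      forall y z, y \in s -> minu s z <= u y z].
    by apply: IH => y' ys; apply: sK; rewrite in_cons ys orbT.
  split=> [|z|y' z]; first by apply: A_min; [exact: Au | exact: Am].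
  - by rewrite /= minEle; case: ifP => _; [exists y | exact: mval].
  - rewrite in_cons ge_min => /orP [/eqP -> | y's]; first by rewrite lexx.
    by rewrite mle ?orbT.
have DK' y : y \in D -> K y by move=> /DK; rewrite in_setE.
have [Aw wval wle] := minuP _ DK'.
exists (minu D); split=> // z Kz; have [y yD /= uyz] := Dcover z Kz.
exact: le_lt_trans (wle _ _ yD) uyz.
Qed.

Theorem stone_weierstrass (h : T -> R) : continuous h -> A h.
Proof.
move=> ch; apply: A_closed => // e e0.
have [[x0 Kx0]|K0] := pselect (exists x, K x); last first.
  by exists (fun _ => 0) => // x Kx; exfalso; apply: K0; exists x.
have che : continuous (fun z => h z + e).
  by move=> z; apply: continuousD; [exact: ch | exact: cst_continuous].
have below x : K x -> exists w, [/\ A w, w x = h x & forall z, K z -> w z < h z + e].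
  move=> Kx; have : forall y, exists u, K y -> [/\ A u, u x = h x & u y = h y].
    move=> y; have [Ky|nKy] := pselect (K y); last by exists (fun _ => 0).
    by have [u Hu] := A_interpolate h Kx Ky; exists u.
  move=> /choice [u hu].
  have [y Ky|z Kz|w [Aw wlt wval]] := @A_min_cover u _ x Kx che.
  - by have [] := hu y Ky.
  - by have [_ _ ->] := hu z Kz; rewrite ltrDl.
  - by exists w; split=> //; have [y Ky ->] := wval x; have [] := hu y Ky.
have : forall x, exists w, K x -> [/\ A w, w x = h x & forall z, K z -> w z < h z + e].
  move=> x; have [Kx|nKx] := pselect (K x); last by exists (fun _ => 0).
  by have [w ?] := below x Kx; exists w.
move=> /choice [w hw].
have che' : continuous (fun z => e - h z).
  by move=> z; apply: continuousB; [exact: cst_continuous | exact: ch].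
(* the maximum of the [w x] is minus the minimum of the [- w x] *)
have [y Ky|z Kz|v [Av vlt vval]] := @A_min_cover (fun y z => - w y z) _ _ Kx0 che'.
- by have [Awy _ _] := hw y Ky; under eq_fun do rewrite -mulN1r; exact: A_scale.
- by have [_ -> _] := hw z Kz; lra.
exists (fun z => - v z) => [|z Kz].
  by under eq_fun do rewrite -mulN1r; exact: A_scale.
have [y Ky vz] := vval z; have [_ _ /(_ z Kz) wlt] := hw y Ky.
have := vlt z Kz; rewrite vz opprK ler_norml => vgt; apply/andP; split; lra.
Qed.

End StoneWeierstrass.

Section Span.
Variables (R : realType) (Y : Type) (S : set (Y -> R)).

Lemma in_span0 : in_span S (fun _ => 0).
Proof.
exists 0%N, (fun _ => 0), (fun _ _ => 0); split; first by case.
by apply/funext => y; rewrite big_ord0.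
Qed.

Lemma in_span_cons c g s : S g -> in_span S s -> in_span S (fun y => c * g y + s y).
Proof.
move=> Sg [n [c' [g' [Sg' ->]]]].
exists n.+1, (fun i => if unlift ord0 i is Some j then c' j else c),
  (fun i => if unlift ord0 i is Some j then g' j else g); split.
  by move=> i; case: (unlift ord0 i).
apply/funext => y; rewrite big_ord_recl unlift_none; congr (_ + _).
by apply: eq_bigr => i _; rewrite liftK.
Qed.

Lemma in_span_ind (P : (Y -> R) -> Prop) : P (fun _ => 0) ->
  (forall c g s, S g -> P s -> P (fun y => c * g y + s y)) ->
  forall s, in_span S s -> P s.
Proof.
move=> P0 Pcons _ [n [c [g [Sg ->]]]]; elim: n c g Sg => [|n IH] c g Sg.
  by under eq_fun do rewrite big_ord0.
under eq_fun do rewrite big_ord_recl.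
by apply: Pcons => //; apply: IH.
Qed.

Lemma in_span_gen g : S g -> in_span S g.
Proof.
move=> Sg; have -> : g = (fun y => 1 * g y + 0) by apply/funext => y; rewrite mul1r addr0.
exact: in_span_cons in_span0.
Qed.

Lemma in_span_add s1 s2 :
  in_span S s1 -> in_span S s2 -> in_span S (fun y => s1 y + s2 y).
Proof.
move=> S1 S2; move: s1 S1.
apply: (in_span_ind (P := fun s => in_span S (fun y => s y + s2 y))) => [|c g s Sg Ss].
  by under eq_fun do rewrite add0r.
by under eq_fun do rewrite -addrA; exact: in_span_cons.
Qed.

Lemma in_span_scale a s : in_span S s -> in_span S (fun y => a * s y).
Proof.
move: s; apply: (in_span_ind (P := fun s => in_span S (fun y => a * s y))).
  by under eq_fun do rewrite mulr0; exact: in_span0.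
move=> c g s Sg Ss.
by under eq_fun do rewrite mulrDr mulrA; exact: in_span_cons.
Qed.

Lemma in_span_mul : (forall g h, S g -> S h -> S (fun y => g y * h y)) ->
  forall s1 s2, in_span S s1 -> in_span S s2 -> in_span S (fun y => s1 y * s2 y).
Proof.
move=> SM s1 s2 S1 S2.
have gen_mul g : S g -> in_span S (fun y => g y * s2 y).
  move=> Sg; move: s2 S2.
  apply: (in_span_ind (P := fun s => in_span S (fun y => g y * s y))) => [|c h s Sh Ss].
    by under eq_fun do rewrite mulr0; exact: in_span0.
  under eq_fun do rewrite mulrDr mulrCA.
  by apply: in_span_cons => //; exact: SM.
move: s1 S1; apply: (in_span_ind (P := fun s => in_span S (fun y => s y * s2 y))).
  by under eq_fun do rewrite mul0r; exact: in_span0.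
move=> c g s Sg Ss; under eq_fun do rewrite mulrDl -mulrA.
by apply: in_span_add => //; apply: in_span_scale; exact: gen_mul.
Qed.

End Span.

Lemma in_span_comp (R : realType) (Y Z : Type) (S : set (Y -> R)) (S' : set (Z -> R))
    (f : Z -> Y) s :
  (forall g, S g -> S' (g \o f)) -> in_span S s -> in_span S' (s \o f).
Proof.
move=> SS'; move: s; apply: (in_span_ind (P := fun s => in_span S' (s \o f))).
  exact: in_span0.
move=> c g s' Sg Ss'.
exact: in_span_cons (SS' _ Sg) Ss'.
Qed.

Section Approximation.
Variables (R : realType) (T : topologicalType) (K : set T).

Definition approx_on (S : set (T -> R)) (u : T -> R) := forall e, 0 < e ->
  exists2 s, in_span S s & forall x, K x -> `|u x - s x| <= e.

Variable S : set (T -> R).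

Lemma approx_on_span u : in_span S u -> approx_on S u.
Proof. by move=> Su e e0; exists u => // x _; rewrite subrr normr0 ltW. Qed.

Lemma approx_on_lin c u v : approx_on S u -> approx_on S v ->
  approx_on S (fun x => c * u x + v x).
Proof.
move=> Su Sv e e0; have c1 : 0 < `|c| + 1 by rewrite ltr_wpDl.
have e2 : 0 < e / 2 by rewrite divr_gt0.
have [su su_span hu] := Su (e / 2 / (`|c| + 1)) (divr_gt0 e2 c1).
have [sv sv_span hv] := Sv (e / 2) e2.
exists (fun x => c * su x + sv x) => [|x Kx].
  by apply: in_span_add => //; exact: in_span_scale.
have -> : c * u x + v x - (c * su x + sv x) = c * (u x - su x) + (v x - sv x) by ring.
apply: (le_trans (ler_normD _ _)); rewrite normrM.
have : `|c| * `|u x - su x| <= (`|c| + 1) * (e / 2 / (`|c| + 1)).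
  by apply: ler_pM => //; [rewrite lerDl | exact: hu].
rewrite [X in _ <= X]mulrC divfK ?gt_eqF //; have := hv x Kx; lra.
Qed.

Lemma approx_on_closed u :
  (forall e, 0 < e -> exists2 v, approx_on S v & forall x, K x -> `|u x - v x| <= e) ->
  approx_on S u.
Proof.
move=> hu e e0; have e2 : 0 < e / 2 by rewrite divr_gt0.
have [v Sv huv] := hu _ e2; have [s Ss hvs] := Sv _ e2.
exists s => // x Kx; have := huv x Kx; have := hvs x Kx.
have := ler_normD (u x - v x) (v x - s x); rewrite addrA subrK; lra.
Qed.

Lemma approx_on_trans (S' : set (T -> R)) u :
  (forall g, S' g -> approx_on S g) -> approx_on S' u -> approx_on S u.
Proof.
move=> S'S S'u; apply: approx_on_closed => e e0.
have [s S's hus] := S'u e e0; exists s => //; move: s S's {hus}.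
apply: (in_span_ind (P := approx_on S)) => [|c g s S'g Ss].
  by apply: approx_on_span; exact: in_span0.
by apply: approx_on_lin => //; exact: S'S.
Qed.

Lemma approx_on_mul u v : compact K ->
  (forall g h, S g -> S h -> S (fun x => g x * h x)) ->
  continuous u -> continuous v -> approx_on S u -> approx_on S v ->
  approx_on S (fun x => u x * v x).
Proof.
move=> cK SM cu cv Su Sv e e0.
have [Mu Mu0 HMu] := compact_norm_bound cK cu.
have [Mv Mv0 HMv] := compact_norm_bound cK cv.
have M0 : 0 < Mu + Mv + 1 by rewrite !addr_gt0.
pose d := Num.min 1 (e / (Mu + Mv + 1)).
have d0 : 0 < d by rewrite lt_min ltr01 divr_gt0.
have d1 : d <= 1 by rewrite ge_min lexx.
have de : (Mu + Mv + 1) * d <= e.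
  by rewrite mulrC -ler_pdivlMr // ge_min lexx orbT.
have [a Sa hua] := Su _ d0; have [b Sb hvb] := Sv _ d0.
exists (fun x => a x * b x) => [|x Kx]; first exact: in_span_mul.
have -> : u x * v x - a x * b x = u x * (v x - b x) + b x * (u x - a x) by ring.
apply: (le_trans (ler_normD _ _)); rewrite !normrM.
have bx : `|b x| <= Mv + 1.
  have := ler_normD (v x) (b x - v x); rewrite addrC subrK distrC.
  by have := HMv x Kx; have := hvb x Kx; lra.
have : `|u x| * `|v x - b x| <= Mu * d by apply: ler_pM => //; [exact: HMu | exact: hvb].
have : `|b x| * `|u x - a x| <= (Mv + 1) * d by apply: ler_pM => //; exact: hua.
lra.
Qed.

End Approximation.

Lemma expR_dist_le (R : realType) (a b : R) :
  `|expR a - expR b| <= expR (Num.max a b) * `|a - b|.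
Proof.
wlog ab : a b / a <= b.
  move=> H; have /orP [/H //|ba] := le_total a b.
  by rewrite distrC (distrC a b) maxC; exact: H.
rewrite max_r // !ler0_norm ?subr_le0 ?ler_expR //.
have eb := expR_gt0 b.
have : (1 + (a - b)) * expR b <= expR a by rewrite -ler_pdivlMr // -expRB expR_ge1Dx.
nra.
Qed.

Lemma expR_near_le (R : realType) (a b L eta : R) :
  `|a| <= L -> `|a - b| <= eta -> eta <= 1 ->
  `|expR a - expR b| <= expR (L + 1) * eta.
Proof.
move=> aL abe e1; apply: le_trans (expR_dist_le a b) _.
have : Num.max a b <= L + 1.
  rewrite ge_max; move: aL abe; rewrite !ler_norml => /andP[? ?] /andP[? ?].
  by apply/andP; split; lra.
rewrite -ler_expR => Emax.
by apply: ler_pM => //; apply: ltW; exact: expR_gt0.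
Qed.

Section ExpDuals.
Variables (R : realType) (X : normedModType R).

Definition expR_duals : set (X -> R) := [set expR \o phi | phi in @is_dual R X].

Lemma expR_dual_continuous (phi : X -> R) : is_dual phi -> continuous (expR \o phi).
Proof.
move=> /dual_continuous cphi x.
by apply: continuous_comp; [exact: cphi | exact: continuous_expR].
Qed.

Lemma expR_dualsM (g h : X -> R) :
  expR_duals g -> expR_duals h -> expR_duals (fun x => g x * h x).
Proof.
move=> [phi phid <-] [psi psid <-]; exists (fun x => phi x + psi x).
  exact: dual_add.
by apply/funext => x; rewrite /= expRD.
Qed.

Theorem expR_duals_dense (K : set X) h : compact K -> continuous h ->
  approx_on K expR_duals h.
Proof.
move=> cK ch; pose A := [set u | continuous u /\ approx_on K expR_duals u].
suff [] : A h by [].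
apply: (@stone_weierstrass R X K A cK) => //
  [c|u v [cu Su] [cv Sv]|u v [cu Su] [cv Sv]|u [] //|u cu hu|x y Kx Ky xy].
- split; first exact: cst_continuous.
  have -> : (fun _ : X => c) = (fun x => c * (expR \o (fun _ => 0)) x).
    by apply/funext => x; rewrite /= expR0 mulr1.
  apply/approx_on_span/in_span_scale/in_span_gen.
  by exists (fun _ => 0); first exact: dual_cst0.
- split; first by move=> x; apply: continuousD; [exact: cu | exact: cv].
  have -> : (fun x => u x + v x) = (fun x => 1 * u x + v x).
    by apply/funext => x; rewrite mul1r.
  exact: approx_on_lin.
- split; first by move=> x; apply: continuousM; [exact: cu | exact: cv].
  exact: approx_on_mul cK expR_dualsM cu cv Su Sv.
- split=> //; apply: approx_on_closed => e e0.
  by have [v [_ Sv] huv] := hu e e0; exists v.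
- have xy0 : x - y != 0 by rewrite subr_eq0; apply/eqP.
  have [phi [phid _ phixy]] := norming_functional xy0.
  exists (expR \o phi).
    split; first exact: expR_dual_continuous.
    by apply/approx_on_span/in_span_gen; exists phi.
  move=> /= /expR_inj /eqP; rewrite -subr_eq0 -dualB // phixy normr_eq0.
  exact/negP.
Qed.

End ExpDuals.

Section Fundamental.
Variables (R : realType) (X : normedModType R) (G : set (R -> R)) (F : set (X -> R)).
Hypothesis hX : exists x : X, x != 0.
Hypothesis hG : fundamental G.
Hypothesis hF : forall f, F f -> is_dual f.
Hypothesis hD : forall phi : X -> R, is_dual phi -> opnorm phi = 1 ->
  forall e : R, 0 < e -> exists f, F f /\ f <> (fun _ => 0) /\
    opnorm (fun x => f x / opnorm f - phi x) < e.

Lemma F_nonempty : exists f, F f.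
Proof.
have [x0 x00] := hX; have [phi [phid phi1 _]] := norming_functional x00.
by have [f [Ff _]] := hD phid phi1 ltr01; exists f.
Qed.

Lemma dual_approx_by_F psi B eta : is_dual psi -> 0 < B -> 0 < eta ->
  exists f c, F f /\ forall x, `|x| <= B -> `|psi x - c * f x| <= eta.
Proof.
move=> psid B0 eta0.
have [[x1 psix1]|psi0] := pselect (exists x, psi x != 0); last first.
  have [f Ff] := F_nonempty; exists f, 0; split=> // x _.
  have -> : psi x = 0 by apply: contrapT => /eqP psix; apply: psi0; exists x.
  by rewrite mul0r subr0 normr0 ltW.
set n := opnorm psi; have n0 : 0 < n := opnorm_gt0 psid psix1.
pose phi x := n^-1 * psi x.
have phid : is_dual phi := dual_scale _ psid.
have phi1 : opnorm phi = 1.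
  by rewrite opnormZ // ger0_norm ?invr_ge0 ?ltW // mulVf ?gt_eqF.
have [f [Ff [f0 hf]]] := hD phid phi1 (divr_gt0 eta0 (mulr_gt0 n0 B0)).
have fd := hF Ff; set m := opnorm f in hf.
have [x2 fx2] : exists x, f x != 0.
  apply: contrapT => nf; apply: f0; apply/funext => x.
  by apply: contrapT => fx; apply: nf; exists x; apply/eqP.
have m0 : 0 < m := opnorm_gt0 fd fx2.
pose del x := f x / m - phi x.
have deld : is_dual del.
  have -> : del = (fun x => m^-1 * f x + -1 * phi x).
    by apply/funext => x; rewrite /del mulN1r mulrC.
  exact: dual_lin.
exists f, (n / m); split=> // x xB.
have -> : psi x - n / m * f x = - n * del x.
  by rewrite /del /phi; field; rewrite !gt_eqF.
rewrite normrM normrN (gtr0_norm n0).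
apply: le_trans (ler_wpM2l (ltW n0) (opnorm_bound x deld)) _.
have -> : eta = n * (eta / (n * B) * B) by field; rewrite !gt_eqF.
by rewrite ler_pM2l //; apply: ler_pM => //; [exact: opnorm_ge0 | exact: ltW].
Qed.

Lemma approx_expR_dual (K : set X) psi : compact K -> is_dual psi ->
  approx_on K [set g \o f | g in G & f in F] (expR \o psi).
Proof.
move=> cK psid e e0; have e2 : 0 < e / 2 by rewrite divr_gt0.
have [B B0 HB] := compact_norm_bound cK (@norm_continuous _ X).
have {}HB x : K x -> `|x| <= B by move=> /HB; rewrite normr_id.
pose L := opnorm psi * B.
have psiL x : K x -> `|psi x| <= L.
  move=> Kx; apply: le_trans (opnorm_bound x psid) _.
  by rewrite ler_wpM2l ?opnorm_ge0 ?HB.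
have EL := expR_gt0 (L + 1).
pose eta := Num.min 1 (e / 2 / expR (L + 1)).
have eta0 : 0 < eta by rewrite lt_min ltr01 divr_gt0.
have [f [c [Ff hf]]] := dual_approx_by_F psid B0 eta0.
have cfK : compact (f @` K).
  apply: continuous_compact cK; apply: continuous_subspaceT.
  exact: dual_continuous (hF Ff).
have cexp : continuous (fun t : R => expR (c * t)).
  move=> t; apply: (@continuous_comp _ _ _ (fun t => c * t) expR t).
    by apply: continuousM; [exact: cst_continuous | exact: cvg_id].
  exact: continuous_expR.
have [s [Gs [d [de hs]]]] := hG.2 _ _ _ cfK cexp e2.
exists (s \o f) => [|x Kx].
  by apply: in_span_comp Gs => g Gg; exists g => //; exists f.
have near_exp : `|expR (psi x) - expR (c * f x)| <= e / 2.
  have eta1 : eta <= 1 by rewrite ge_min lexx.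
  apply: le_trans (expR_near_le (psiL x Kx) (hf x (HB x Kx)) eta1) _.
  by rewrite mulrC -ler_pdivlMr // ge_min lexx orbT.
have := hs (f x) (ex_intro2 _ _ x Kx erefl).
have := ler_normD (expR (psi x) - expR (c * f x)) (expR (c * f x) - s (f x)).
rewrite addrA subrK /=; lra.
Qed.

End Fundamental.

Unset Implicit Arguments.

Theorem theorem4p3p3 (R : realType) (X : normedModType R)
  (G : set (R -> R)) (F : set (X -> R)) :
  (exists x : X, x != 0) ->
  fundamental G ->
  (forall f, F f -> is_dual f) ->
  (forall phi : X -> R, is_dual phi -> opnorm phi = 1 ->
     forall e : R, 0 < e ->
       exists f, F f /\ f <> (fun _ => 0) /\
         opnorm (fun x => f x / opnorm f - phi x) < e) ->
  fundamental [set g \o f | g in G & f in F].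
Proof.
move=> hX hG hF hD; split.
  move=> _ [g Gg [f Ff <-]] x; apply: continuous_comp.
    exact: (dual_continuous (hF _ Ff)).
  exact: hG.1.
move=> K h eps cK ch eps0; have e2 : 0 < eps / 2 by rewrite divr_gt0.
have : approx_on K [set g \o f | g in G & f in F] h.
  apply: approx_on_trans (expR_duals_dense cK ch) => _ [psi psid <-].
  exact: approx_expR_dual.
move=> /(_ _ e2) [s Ss hs].
exists s; split=> //; exists (eps / 2); split=> //.
by rewrite ltr_pdivrMr // ltr_pMr // ltr1n.
Qed.
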